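(* If $W\subseteq\ell^\infty$ is analytic with respect to the product topology on $\mathbb R^\omega$, then $\mathsf{HC}^*(W)=\bigcap_{w\in W}\mathsf{HC}(w)$ is a co-analytic subset of $\ell^2$.
   Context: $\omega=\{0,1,2,\dots\}$. $\ell^\infty$ is the set of bounded real sequences indexed by $\omega$, viewed as a subset of $\mathbb R^\omega$ with the product topology. $\ell^2$ is the Hilbert space of square-summable real sequences with its norm topology. For $w\in\ell^\infty$, $B_w:\ell^2\to\ell^2$ is $B_w(x)(i)=w(i)\,x(i+1)$. $\mathsf{HC}(w)$ is the set of $x\in\ell^2$ such that $\{B_w^k(x):k\in\omega\}$ is dense in $\ell^2$, and $\mathsf{HC}^*(W)=\bigcap_{w\in W}\mathsf{HC}(w)$. A set is analytic if it is a continuous image of a Borel subset of a Polish space, co-analytic if its complement is analytic. *)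

From HB Require Import structures.
From mathcomp Require Import all_boot all_order all_algebra.
From mathcomp Require Import all_classical all_reals all_analysis.
Set Implicit Arguments. Unset Strict Implicit. Unset Printing Implicit Defensive.
Import Order.TTheory GRing.Theory Num.Theory.
Import numFieldNormedType.Exports.
Local Open Scope classical_set_scope.
Local Open Scope ring_scope.

Section DST.
Variable R : realType.

Definition polish (T : topologicalType) : Prop :=
  exists d : T -> T -> R,
  [/\ [/\ (forall x y, 0 <= d x y),
      (forall x y, d x y = 0 <-> x = y),
      (forall x y, d x y = d y x)
    & (forall x y z, d x z <= d x y + d y z)],
      (forall A : set T, open A <->
         (forall x, A x -> exists2 e : R, 0 < e & [set y | d x y < e] `<=` A)),
      (forall u : nat -> T,
         (forall e : R, 0 < e -> exists N : nat, forall m n : nat,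
            (N <= m)%N -> (N <= n)%N -> d (u m) (u n) < e) ->
         exists l : T, u @ \oo --> l)
    & exists D : set T, countable D /\ dense D].

Definition borel_set (T : topologicalType) (B : set T) : Prop :=
  <<s [set U : set T | open U] >> B.

Definition analytic (X : topologicalType) (A : set X) : Prop :=
  exists (P : topologicalType) (B : set P) (f : P -> X),
    [/\ polish P, borel_set B, {within B, continuous f} & f @` B = A].

Definition coanalytic (X : topologicalType) (A : set X) : Prop :=
  analytic (~` A).

End DST.

Section Seq.
Variable R : realType.

Definition linf : set (nat -> R) :=
  [set w | exists M : R, forall i, `|w i| <= M].

(** squared l^2 distance (as an extended real, always defined) *)
Definition l2dist2 (x y : nat -> R) : \bar R :=
  (\sum_(0 <= k <oo) ((x k - y k) ^+ 2)%:E)%E.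

Definition l2pred (x : nat -> R) : bool :=
  `[< (\sum_(0 <= k <oo) ((x k) ^+ 2)%:E < +oo)%E >].

Definition l2 := {x : nat -> R | l2pred x}.
HB.instance Definition _ := [Choice of l2 by <:].

(** the norm topology of l^2: U is open iff it contains an l^2-ball
    (of squared radius e > 0) around each of its points *)
Definition l2_open (U : set l2) : Prop :=
  forall x, U x -> exists2 e : R, 0 < e &
    forall y : l2, (l2dist2 (val x) (val y) < e%:E)%E -> U y.

Lemma l2_openT : l2_open setT.
Proof. by move=> x _; exists 1. Qed.

Lemma l2_openI : setI_closed l2_open.
Proof.
move=> A B oA oB x [/oA [e1 e10 h1] /oB [e2 e20 h2]].
exists (Order.min e1 e2); first by rewrite lt_min e10 e20.
move=> y hy; split.
- apply: h1; apply: (lt_le_trans hy); rewrite lee_fin; by rewrite ge_min lexx.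
- apply: h2; apply: (lt_le_trans hy); rewrite lee_fin; by rewrite ge_min lexx orbT.
Qed.

Lemma l2_open_bigU (I : Type) (f : I -> set l2) :
  (forall i, l2_open (f i)) -> l2_open (\bigcup_i f i).
Proof.
move=> hf x [i _ fx]; have [e e0 h] := hf i x fx.
by exists e => // y /h fy; exists i.
Qed.

HB.instance Definition _ :=
  isOpenTopological.Build l2 l2_openT l2_openI l2_open_bigU.

Definition Bw (w x : nat -> R) : nat -> R := fun i => w i * x i.+1.

Definition HC (w : nat -> R) : set l2 :=
  [set x | dense [set y : l2 | exists k : nat, val y = iter k (Bw w) (val x)]].

Definition HCstar (W : set (nat -> R)) : set l2 :=
  \bigcap_(w in W) HC w.

End Seq.

(* Write W = g(B) with B a Borel subset of a Polish space P and g continuous on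
   B. The complement of HC*(W) is then the projection onto l2 of
     E = {(p, x) in B x l2 | x is not hypercyclic for B_(g p)},
   and P x l2 is Polish (l2 is complete and separable), so it suffices that E is
   Borel. An orbit fails to be dense iff it avoids one of the countably many balls
   with a finitely supported rational centre and squared radius 1/(m+1). Avoiding
   a fixed ball means that, for every k, the squared distance from the centre to
   B_(g p)^k x exceeds the radius; this condition is relatively open in (p, x),
   because the partial sums of that distance are polynomials in finitely many
   coordinates of g p and x. Hence E is a countable union of countable
   intersections of relatively open subsets of B x l2. *)

From HB Require Import structures.
From mathcomp Require Import all_boot all_order all_algebra.
From mathcomp Require Import all_classical all_reals all_analysis.
From mathcomp Require Import ring lra.
Set Implicit Arguments. Unset Strict Implicit. Unset Printing Implicit Defensive.
Import Order.TTheory GRing.Theory Num.Theory.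
Import numFieldNormedType.Exports.
Local Open Scope classical_set_scope.
Local Open Scope ring_scope.

Section nneseries.
Variable R : realType.
Implicit Types (a : nat -> R) (s : R).
Local Open Scope ereal_scope.

Lemma psum_le_nneseries a N : (forall k, 0 <= a k)%R ->
  (\sum_(0 <= k < N) a k)%:E <= \sum_(0 <= k <oo) (a k)%:E.
Proof.
by move=> a0; rewrite -sumEFin; apply: nneseries_lim_ge => n _ _; rewrite lee_fin.
Qed.

Lemma term_le_nneseries a k : (forall k, 0 <= a k)%R ->
  (a k)%:E <= \sum_(0 <= i <oo) (a i)%:E.
Proof.
move=> a0; apply: le_trans (psum_le_nneseries k.+1 a0).
by rewrite lee_fin big_nat_recr //= lerDr sumr_ge0.
Qed.

Lemma nneseries_le_ub a s : (forall k, 0 <= a k)%R ->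
  (forall N, \sum_(0 <= k < N) a k <= s)%R -> \sum_(0 <= k <oo) (a k)%:E <= s%:E.
Proof.
move=> a0 hs; apply: lime_le.
  by apply: is_cvg_nneseries => n _ _; rewrite lee_fin.
by apply: nearW => N; rewrite sumEFin lee_fin.
Qed.

Lemma nneseries_gtP a s : (forall k, 0 <= a k)%R ->
  s%:E < \sum_(0 <= k <oo) (a k)%:E <-> exists N, (s < \sum_(0 <= k < N) a k)%R.
Proof.
move=> a0; split=> [|[N hN]]; last first.
  by apply: lt_le_trans (psum_le_nneseries N a0); rewrite lte_fin.
apply: contraPP => /forallNP hN; apply/negP; rewrite -leNgt.
by apply: nneseries_le_ub => // N; rewrite leNgt; apply/negP/hN.
Qed.

End nneseries.

Section cauchy_schwarz.
Variables (R : rcfType) (I : eqType) (r : seq I).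
Implicit Types a b : I -> R.

Lemma sum_sqr_eq0 a : \sum_(i <- r) a i ^+ 2 = 0 -> {in r, forall i, a i = 0}.
Proof.
move=> /eqP; rewrite psumr_eq0 => [/allP h i /h|i _]; last exact: sqr_ge0.
by rewrite sqrf_eq0 => /eqP.
Qed.

Lemma sum_mul_le_sqrt a b : \sum_(i <- r) a i * b i <=
  Num.sqrt (\sum_(i <- r) a i ^+ 2) * Num.sqrt (\sum_(i <- r) b i ^+ 2).
Proof.
set SA := \sum_(i <- r) a i ^+ 2; set SB := \sum_(i <- r) b i ^+ 2.
have SA0 : 0 <= SA by apply: sumr_ge0 => i _; exact: sqr_ge0.
have SB0 : 0 <= SB by apply: sumr_ge0 => i _; exact: sqr_ge0.
set t := Num.sqrt SA; set u := Num.sqrt SB.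
have tSA : t ^+ 2 = SA by exact: sqr_sqrtr.
have uSB : u ^+ 2 = SB by exact: sqr_sqrtr.
(* Termwise AM-GM, scaled so that the right-hand sides sum to [2 (t u)^2]. *)
have key : t * u * \sum_(i <- r) a i * b i <= (t * u) ^+ 2.
  have amgm i : 2 * t * u * (a i * b i) <= u ^+ 2 * a i ^+ 2 + t ^+ 2 * b i ^+ 2.
    by have := sqr_ge0 (u * a i - t * b i); rewrite !expr2; lra.
  have : \sum_(i <- r) 2 * t * u * (a i * b i) <=
         \sum_(i <- r) (u ^+ 2 * a i ^+ 2 + t ^+ 2 * b i ^+ 2).
    by apply: ler_sum => i _; exact: amgm.
  have -> : \sum_(i <- r) (u ^+ 2 * a i ^+ 2 + t ^+ 2 * b i ^+ 2) = 2 * (t * u) ^+ 2.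
    by rewrite big_split /= -!mulr_sumr -/SA -/SB -tSA -uSB; ring.
  rewrite -mulr_sumr; lra.
have [tu_eq0|tu_neq0] := eqVneq (t * u) 0; last first.
  have tu_gt0 : 0 < t * u by rewrite lt_def tu_neq0 mulr_ge0 ?sqrtr_ge0.
  by rewrite -(ler_pM2l tu_gt0) -expr2.
rewrite tu_eq0 big_seq big1 // => i ri.
have [SA_eq0|SB_eq0] : SA = 0 \/ SB = 0.
  rewrite -tSA -uSB; move/eqP: tu_eq0; rewrite mulf_eq0.
  by move=> /orP[]/eqP->; [left|right]; rewrite expr0n.
- by rewrite (sum_sqr_eq0 SA_eq0 ri) mul0r.
- by rewrite (sum_sqr_eq0 SB_eq0 ri) mulr0.
Qed.

Lemma sum_sqrD_le a b : \sum_(i <- r) (a i + b i) ^+ 2 <=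
  (Num.sqrt (\sum_(i <- r) a i ^+ 2) + Num.sqrt (\sum_(i <- r) b i ^+ 2)) ^+ 2.
Proof.
have SA0 : 0 <= \sum_(i <- r) a i ^+ 2 by apply: sumr_ge0 => i _; exact: sqr_ge0.
have SB0 : 0 <= \sum_(i <- r) b i ^+ 2 by apply: sumr_ge0 => i _; exact: sqr_ge0.
have -> : \sum_(i <- r) (a i + b i) ^+ 2 =
    \sum_(i <- r) a i ^+ 2 + 2 * \sum_(i <- r) a i * b i + \sum_(i <- r) b i ^+ 2.
  by rewrite mulr_sumr -!big_split /=; apply: eq_bigr => i _; ring.
rewrite sqrrD !sqr_sqrtr //; have := sum_mul_le_sqrt a b; lra.
Qed.

End cauchy_schwarz.

Section metric_spaces.
Variable R : realType.

Definition is_metric (T : Type) (d : T -> T -> R) : Prop :=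
  [/\ (forall x y, 0 <= d x y), (forall x y, d x y = 0 <-> x = y),
      (forall x y, d x y = d y x) & (forall x y z, d x z <= d x y + d y z)].

Definition metrizes (T : topologicalType) (d : T -> T -> R) : Prop :=
  forall A : set T, open A <->
    (forall x, A x -> exists2 e : R, 0 < e & [set y | d x y < e] `<=` A).

Definition complete_for (T : topologicalType) (d : T -> T -> R) : Prop :=
  forall u : nat -> T,
    (forall e : R, 0 < e -> exists N : nat, forall m n : nat,
       (N <= m)%N -> (N <= n)%N -> d (u m) (u n) < e) ->
    exists l : T, u @ \oo --> l.

Definition separable_space (T : topologicalType) : Prop :=
  exists D : set T, countable D /\ dense D.

Lemma polishP (T : topologicalType) : polish R T <->
  exists d : T -> T -> R,
    [/\ is_metric d, metrizes d, complete_for d & separable_space T].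
Proof. by []. Qed.

Section metric_balls.
Variables (T : topologicalType) (d : T -> T -> R).
Hypotheses (d_metric : is_metric d) (d_metrizes : metrizes d).

Lemma open_metric_ball x e : open [set y | d x y < e].
Proof.
case: d_metric => _ _ _ d_tri.
apply/d_metrizes => y /= xy; exists (e - d x y); first by rewrite subr_gt0.
by move=> z /= yz; apply: le_lt_trans (d_tri x y z) _; lra.
Qed.

Lemma metric_nbhsP x (A : set T) :
  nbhs x A <-> exists2 e : R, 0 < e & [set y | d x y < e] `<=` A.
Proof.
case: d_metric => _ d_eq0 _ _; split.
  rewrite nbhsE => -[B [oB Bx] BA].
  by have [e e0 xeB] := (d_metrizes B).1 oB x Bx; exists e => // y /xeB/BA.
move=> [e e0 xeA]; rewrite nbhsE; exists [set y | d x y < e] => //.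
by split; [exact: open_metric_ball | rewrite /= (d_eq0 x x).2].
Qed.

End metric_balls.

Section metric_product.
Variables (T1 T2 : topologicalType) (d1 : T1 -> T1 -> R) (d2 : T2 -> T2 -> R).
Hypotheses (d1_metric : is_metric d1) (d2_metric : is_metric d2).
Local Notation d := (fun z w : T1 * T2 => d1 z.1 w.1 + d2 z.2 w.2).

Let d1_le z w : d1 z.1 w.1 <= d z w.
Proof. by case: d2_metric => d2_ge0 _ _ _; rewrite lerDl. Qed.

Let d2_le z w : d2 z.2 w.2 <= d z w.
Proof. by case: d1_metric => d1_ge0 _ _ _; rewrite lerDr. Qed.

Lemma is_metricX : is_metric d.
Proof.
case: d1_metric => d1_ge0 d1_eq0 d1C d1_tri.
case: d2_metric => d2_ge0 d2_eq0 d2C d2_tri.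
split=> [z w|[a b] [a' b']|z w|z w v] /=.
- by rewrite addr_ge0.
- split=> [/eqP|[-> ->]]; last by rewrite (d1_eq0 a' a').2 // (d2_eq0 b' b').2 // addr0.
  by rewrite paddr_eq0 // => /andP[/eqP/d1_eq0 -> /eqP/d2_eq0 ->].
- by rewrite d1C d2C.
- by have := d1_tri z.1 w.1 v.1; have := d2_tri z.2 w.2 v.2; lra.
Qed.

Lemma metrizesX : metrizes d1 -> metrizes d2 -> metrizes d.
Proof.
move=> d1_metrizes d2_metrizes A; rewrite openE; split.
  move=> oA z Az; have [[P Q] [/= Pz Qz] PQA] := oA z Az.
  have [e1 e1_gt0 e1P] := (metric_nbhsP d1_metric d1_metrizes z.1 P).1 Pz.
  have [e2 e2_gt0 e2Q] := (metric_nbhsP d2_metric d2_metrizes z.2 Q).1 Qz.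
  exists (Order.min e1 e2); first by rewrite lt_min e1_gt0 e2_gt0.
  move=> w /= zw; apply: PQA; split; [apply: e1P | apply: e2Q] => /=.
    by apply: le_lt_trans (d1_le z w) (lt_le_trans zw _); rewrite ge_min lexx.
  by apply: le_lt_trans (d2_le z w) (lt_le_trans zw _); rewrite ge_min lexx orbT.
move=> dA z Az; have [e e_gt0 zeA] := dA z Az.
exists ([set a | d1 z.1 a < e / 2], [set b | d2 z.2 b < e / 2]).
  split; [apply/(metric_nbhsP d1_metric d1_metrizes) |
         apply/(metric_nbhsP d2_metric d2_metrizes)];
    by exists (e / 2) => //; rewrite divr_gt0.
by move=> [a b] /= [za zb]; apply: zeA; rewrite /= [e]splitr ltrD.
Qed.

Lemma complete_forX : complete_for d1 -> complete_for d2 -> complete_for d.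
Proof.
move=> d1_complete d2_complete u u_cauchy.
have [l1 ul1] : exists l1 : T1, (fun n => (u n).1) @ \oo --> l1.
  apply: (d1_complete (fun n => (u n).1)) => e /u_cauchy [N uN]; exists N => m n Nm Nn.
  exact: le_lt_trans (d1_le _ _) (uN _ _ Nm Nn).
have [l2 ul2] : exists l2 : T2, (fun n => (u n).2) @ \oo --> l2.
  apply: (d2_complete (fun n => (u n).2)) => e /u_cauchy [N uN]; exists N => m n Nm Nn.
  exact: le_lt_trans (d2_le _ _) (uN _ _ Nm Nn).
exists (l1, l2) => A [[P Q]] /= [l1P l2Q] PQA.
have uPQ : \forall n \near \oo, P (u n).1 /\ Q (u n).2.
  by apply: filterI; [exact: ul1 | exact: ul2].
by apply: filterS uPQ => n /PQA.
Qed.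

End metric_product.

Lemma separableX (T1 T2 : topologicalType) :
  separable_space T1 -> separable_space T2 -> separable_space (T1 * T2)%type.
Proof.
move=> [D1 [D1_countable D1_dense]] [D2 [D2_countable D2_dense]].
exists (D1 `*` D2); split; first exact: countableX.
move=> O [z Oz] oO.
have [[P Q] /= [Pz Qz] PQO] := oO z Oz.
have [a [Pa D1a]] := D1_dense P° (ex_intro _ z.1 Pz) (@open_interior _ P).
have [b [Qb D2b]] := D2_dense Q° (ex_intro _ z.2 Qz) (@open_interior _ Q).
by exists (a, b); split; [apply: PQO; split; exact: interior_subset | split].
Qed.

Lemma polishX (T1 T2 : topologicalType) :
  polish R T1 -> polish R T2 -> polish R (T1 * T2)%type.
Proof.
move=> /polishP[d1 [d1_metric d1_metrizes d1_complete T1_separable]].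
move=> /polishP[d2 [d2_metric d2_metrizes d2_complete T2_separable]].
apply/polishP; exists (fun z w => d1 z.1 w.1 + d2 z.2 w.2); split.
- exact: is_metricX.
- exact: metrizesX.
- exact: complete_forX.
- exact: separableX.
Qed.

End metric_spaces.

Section borel_sets.
Variable T : topologicalType.
Implicit Types A B U : set T.

Lemma borel_open U : open U -> borel_set U.
Proof. by move=> oU; apply: sub_sigma_algebra. Qed.

Lemma borel_setC A : borel_set A -> borel_set (~` A).
Proof. by move=> bA; rewrite -setTD; exact: sigma_algebraCD. Qed.

Lemma borel_bigcup (I : countType) (F : I -> set T) :
  (forall i, borel_set (F i)) -> borel_set (\bigcup_i F i).
Proof.
move=> bF; have -> : \bigcup_i F i = \bigcup_n oapp F set0 (unpickle n).
  apply/seteqP; split=> x [i _ Fix]; first by exists (pickle i); rewrite ?pickleK.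
  by move: Fix; case: (unpickle i) => //= j Fjx; exists j.
apply: sigma_algebra_bigcup => n; case: (unpickle n) => [i|] /=.
- exact: (bF i).
- exact: sigma_algebra0.
Qed.

Lemma borel_bigcap (I : countType) (F : I -> set T) :
  (forall i, borel_set (F i)) -> borel_set (\bigcap_i F i).
Proof.
move=> bF; rewrite -[X in borel_set X]setCK setC_bigcap.
by apply: borel_setC; apply: borel_bigcup => i; apply: borel_setC; exact: (bF i).
Qed.

Lemma borel_setI A B : borel_set A -> borel_set B -> borel_set (A `&` B).
Proof.
move=> bA bB; have -> : A `&` B = \bigcap_(b : bool) (if b then A else B).
  apply/seteqP; split=> x => [[Ax Bx] []|AB] //.
  by split; [exact: (AB true) | exact: (AB false)].
by apply: borel_bigcap => -[].
Qed.

Lemma borel_preimage (S : topologicalType) (f : T -> S) (B : set S) :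
  continuous f -> borel_set B -> borel_set (f @^-1` B).
Proof.
move=> cf; apply: (@smallest_sub _ _ _ [set A | borel_set (f @^-1` A)]).
  split=> [|A|F] /=.
  - by rewrite preimage_set0; exact: sigma_algebra0.
  - by rewrite setTD preimage_setC; exact: borel_setC.
  - by rewrite preimage_bigcup; exact: borel_bigcup.
by move=> A oA; apply: borel_open; exact: open_comp.
Qed.

End borel_sets.

Section subspace_product.
Variables (P Q : topologicalType) (B : set P).

Lemma open_subspaceX_trace (U : set (subspace B * Q)%type) : open U ->
  exists2 O : set (P * Q), open O & fst @^-1` B `&` U = fst @^-1` B `&` O.
Proof.
move=> oU.
exists [set z | exists V W, [/\ open V, open W, V z.1, W z.2 &
   forall p q, V p -> W q -> B p -> U (p, q)]].
  rewrite openE => z [V [W [oV oW Vz Wz VWU]]].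
  exists (V, W); first by split; apply: open_nbhs_nbhs.
  by move=> [p q] /= [Vp Wq]; exists V, W.
apply/seteqP; split=> -[p q] /= [Bp pqU]; split=> //; last first.
  by case: pqU => V [W [_ _ Vp Wq]]; exact.
have [[V' W'] /= [V'p W'q] VWU] := oU (p, q) pqU.
have [V Vp V'VB] := (nbhs_subspace_ex _ Bp).1 V'p.
exists V°, W'°; split => //; try exact: open_interior.
move=> p' q' /interior_subset Vp' /interior_subset W'q' Bp'.
by apply: VWU; split => //=; have [] : (V' `&` B) p' by rewrite V'VB.
Qed.

Lemma borel_subspaceX_open (U : set (subspace B * Q)%type) :
  borel_set B -> open U -> borel_set (fst @^-1` B `&` U).
Proof.
move=> bB /open_subspaceX_trace [V oV ->].
apply: borel_setI; last exact: borel_open.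
by apply: borel_preimage bB => z; exact: cvg_fst.
Qed.

End subspace_product.

Section l2dist2.
Variable R : realType.
Implicit Types x y z : nat -> R.
Local Open Scope ereal_scope.

Lemma l2dist2_ge0 x y : 0 <= l2dist2 x y.
Proof. by apply: nneseries_ge0 => n _ _; rewrite lee_fin sqr_ge0. Qed.

Lemma l2dist2_sym x y : l2dist2 x y = l2dist2 y x.
Proof.
rewrite /l2dist2; congr (limn _); apply/funext => n; apply: eq_bigr => i _.
by rewrite -sqrrN opprB.
Qed.

Lemma l2dist2x0 x : l2dist2 x (fun=> 0%R) = \sum_(0 <= k <oo) ((x k) ^+ 2)%:E.
Proof.
rewrite /l2dist2; congr (limn _); apply/funext => n.
by apply: eq_bigr => i _; rewrite subr0.
Qed.

Lemma l2dist2_quasi_triangle x y z :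
  l2dist2 x z <= 2%:E * l2dist2 x y + 2%:E * l2dist2 y z.
Proof.
rewrite /l2dist2 -!nneseriesZl; last 2 first.
- by move=> i _; rewrite lee_fin sqr_ge0.
- by move=> i _; rewrite lee_fin sqr_ge0.
rewrite -nneseriesD; last 2 first.
- by move=> i _ _; rewrite -EFinM lee_fin mulr_ge0 // sqr_ge0.
- by move=> i _ _; rewrite -EFinM lee_fin mulr_ge0 // sqr_ge0.
apply: lee_nneseries => [i _ _|n _]; first by rewrite lee_fin sqr_ge0.
rewrite -!EFinM -EFinD lee_fin.
have -> : (x n - z n = (x n - y n) + (y n - z n))%R by rewrite addrA subrK.
by have := sqr_ge0 (x n - y n - (y n - z n)); rewrite !expr2; lra.
Qed.

Lemma l2predE (x : l2 R) : \sum_(0 <= k <oo) ((val x k) ^+ 2)%:E < +oo.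
Proof. by case: x => x /= /asboolP. Qed.

Lemma l2dist2_lty (x y : l2 R) : l2dist2 (val x) (val y) < +oo.
Proof.
apply: le_lt_trans (l2dist2_quasi_triangle _ (fun=> 0%R) _) _.
rewrite (l2dist2_sym (fun=> 0%R)) !l2dist2x0.
by rewrite lte_add_pinfty // lte_mul_pinfty // ?l2predE // -l2dist2x0 l2dist2_ge0.
Qed.

Lemma l2pred_l2dist2 (c v : nat -> R) : l2pred c -> l2dist2 c v < +oo -> l2pred v.
Proof.
move=> /asboolP hc hv; apply/asboolP; rewrite -l2dist2x0.
apply: le_lt_trans (l2dist2_quasi_triangle _ c _) _.
by rewrite (l2dist2_sym _ c) l2dist2x0 lte_add_pinfty // lte_mul_pinfty.
Qed.

End l2dist2.

Section l2_metric.
Variable R : realType.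
Implicit Types x y z : l2 R.

Definition l2d x y : R := Num.sqrt (fine (l2dist2 (val x) (val y))).

Lemma l2_openE (A : set (l2 R)) : open A <-> l2_open A.
Proof. by []. Qed.

Lemma l2dist2E x y : l2dist2 (val x) (val y) = ((l2d x y) ^+ 2)%:E.
Proof.
have fin_xy : l2dist2 (val x) (val y) \is a fin_num.
  by rewrite ge0_fin_numE ?l2dist2_lty // l2dist2_ge0.
by rewrite /l2d sqr_sqrtr ?fineK // fine_ge0 // l2dist2_ge0.
Qed.

Lemma l2d_ge0 x y : 0 <= l2d x y. Proof. exact: sqrtr_ge0. Qed.

Lemma l2d_ltE x y e : 0 <= e ->
  (l2d x y < e) = (l2dist2 (val x) (val y) < (e ^+ 2)%:E)%E.
Proof. by move=> e_ge0; rewrite l2dist2E lte_fin ltr_sqr ?nnegrE ?l2d_ge0. Qed.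

Lemma l2d_leE x y e : 0 <= e ->
  (l2d x y <= e) = (l2dist2 (val x) (val y) <= (e ^+ 2)%:E)%E.
Proof. by move=> e_ge0; rewrite l2dist2E lee_fin ler_sqr ?nnegrE ?l2d_ge0. Qed.

Lemma psum_le_l2d x y N :
  \sum_(0 <= k < N) (val x k - val y k) ^+ 2 <= l2d x y ^+ 2.
Proof. by rewrite -lee_fin -l2dist2E; exact: psum_le_nneseries (fun k => sqr_ge0 _). Qed.

Lemma coord_le_l2d x y i : `|val x i - val y i| <= l2d x y.
Proof.
have := term_le_nneseries i (fun k => sqr_ge0 (val x k - val y k)).
rewrite -/(l2dist2 _ _) l2dist2E lee_fin => xy_i.
by rewrite -(ler_sqr (normr_ge0 _) (l2d_ge0 x y)) real_normK ?num_real.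
Qed.

Lemma l2d_triangle x y z : l2d x z <= l2d x y + l2d y z.
Proof.
rewrite -(ler_sqr (l2d_ge0 _ _)) ?nnegrE ?addr_ge0 ?l2d_ge0 //.
rewrite -lee_fin -l2dist2E; apply: nneseries_le_ub => [k|N]; first exact: sqr_ge0.
under eq_bigr => i _ do rewrite -(subrKA (val y i) (val x i) (- val z i)).
apply: le_trans (sum_sqrD_le _ _ _) _.
rewrite ler_sqr ?nnegrE ?addr_ge0 ?sqrtr_ge0 ?l2d_ge0 //.
have sqrt_psum_le u v : Num.sqrt (\sum_(0 <= k < N) (val u k - val v k) ^+ 2) <= l2d u v.
  rewrite -(ger0_norm (l2d_ge0 u v)) -sqrtr_sqr ler_sqrt ?sqr_ge0 //.
  exact: psum_le_l2d.
by apply: lerD; apply: sqrt_psum_le.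
Qed.

Lemma is_metric_l2d : is_metric l2d.
Proof.
split=> [||x y|]; [exact: l2d_ge0 | move=> x y; split | | exact: l2d_triangle].
- move=> xy0; apply/val_inj/funext => i; apply/eqP; rewrite -subr_eq0 -normr_eq0.
  by rewrite eq_le normr_ge0 -xy0 coord_le_l2d.
- move=> <-; rewrite /l2d /l2dist2 eseries0 ?sqrtr0 // => i _ _.
  by rewrite subrr expr0n.
- by rewrite /l2d l2dist2_sym.
Qed.

Lemma metrizes_l2d : metrizes l2d.
Proof.
move=> A; rewrite l2_openE; split=> Aopen x Ax; have [e e_gt0 xeA] := Aopen x Ax.
  exists (Num.sqrt e); first by rewrite sqrtr_gt0.
  by move=> y /=; rewrite l2d_ltE ?sqrtr_ge0 // sqr_sqrtr ?ltW //; exact: xeA.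
exists (e ^+ 2); first by rewrite exprn_gt0.
by move=> y; rewrite -l2d_ltE ?ltW //; exact: xeA.
Qed.

End l2_metric.

Section l2_complete.
Variable R : realType.

Lemma cvg_psum_sqr_dist (T : Type) (F : set_system T) {FF : Filter F}
    (c : nat -> R) (f : T -> nat -> R) (l : nat -> R) N :
  (forall k, f x k @[x --> F] --> l k) ->
  (\sum_(0 <= k < N) (c k - f x k) ^+ 2) @[x --> F] -->
  \sum_(0 <= k < N) (c k - l k) ^+ 2.
Proof.
move=> fl; apply: cvg_big => [|k _]; first exact: add_continuous.
under eq_cvg do rewrite expr2; rewrite expr2.
by apply: cvgM; apply: cvgB => //; exact: cvg_cst.
Qed.

Lemma l2dist2_le_cvg (x : nat -> R) (v : nat -> nat -> R) (l : nat -> R) (r : R) :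
  (forall k, v n k @[n --> \oo] --> l k) ->
  (\forall n \near \oo, l2dist2 x (v n) <= r%:E)%E -> (l2dist2 x l <= r%:E)%E.
Proof.
move=> vl xv_le; apply: nneseries_le_ub => [k|N]; first exact: sqr_ge0.
apply: (cvgr_to_le (cvg_psum_sqr_dist (c := x) (N := N) vl)).
apply: filterS xv_le => n xvn; rewrite -lee_fin; apply: le_trans xvn.
exact: psum_le_nneseries (fun k => sqr_ge0 _).
Qed.

Lemma l2_complete : complete_for (@l2d R).
Proof.
move=> u u_cauchy.
have [l ul] : exists l : nat -> R, forall i, val (u n) i @[n --> \oo] --> l i.
  have coord_cvg i : cvg ((fun n => val (u n) i) @ \oo).
    apply/cauchy_cvgP; apply: cauchy_exP => e /u_cauchy [N uN].
    exists (val (u N) i), N => // n /= Nn; rewrite /ball /=.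
    exact: le_lt_trans (coord_le_l2d _ _ _) (uN _ _ (leqnn N) Nn).
  by exists (fun i => lim ((fun n => val (u n) i) @ \oo)) => i; exact: coord_cvg.
have ul_le e : 0 < e -> exists N, forall m, (N <= m)%N ->
    (l2dist2 l (val (u m)) <= (e ^+ 2)%:E)%E.
  move=> e_gt0; have [N uN] := u_cauchy e e_gt0; exists N => m Nm.
  rewrite l2dist2_sym; apply: l2dist2_le_cvg ul _; exists N => // n /= Nn.
  by rewrite -l2d_leE ?ltW ?uN.
have l_l2 : l2pred l.
  have [N uN] := ul_le 1 ltr01.
  apply: (l2pred_l2dist2 (svalP (u N))); rewrite l2dist2_sym.
  exact: le_lt_trans (uN _ (leqnn _)) (ltry _).
exists (exist _ l l_l2).
move=> A /(metric_nbhsP (@is_metric_l2d R) (@metrizes_l2d R)) [e e_gt0 leA].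
have [N uN] := ul_le (e / 2) (divr_gt0 e_gt0 (ltr0n _ 2)).
exists N => // m /= Nm; apply: leA => /=.
have := uN m Nm; rewrite -(l2d_leE (exist _ l l_l2)) ?divr_ge0 ?(ltW e_gt0) //.
move=> /le_lt_trans; apply.
by rewrite ltr_pdivrMr // ltr_pMr // ltr1n.
Qed.

End l2_complete.

Section l2_separable.
Variable R : realType.

Definition qseq (s : seq rat) : nat -> R := fun i => ratr (nth 0 s i).

Lemma l2pred_finite_support (v : nat -> R) M :
  (forall i, (M <= i)%N -> v i = 0) -> l2pred v.
Proof.
move=> v0; apply/asboolP; rewrite (nneseries_split 0 M); last first.
  by move=> k _; rewrite lee_fin sqr_ge0.
rewrite add0n eseries0 ?adde0 ?sumEFin ?ltry // => i Mi _.
by rewrite v0 // expr0n.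
Qed.

Lemma l2pred_qseq s : l2pred (qseq s).
Proof.
apply: (@l2pred_finite_support _ (size s)) => i si.
by rewrite /qseq nth_default // rmorph0.
Qed.

Definition qel (s : seq rat) : l2 R := exist _ (qseq s) (l2pred_qseq s).

Lemma rat_approx (r d : R) : 0 < d -> exists q : rat, `|r - ratr q| < d.
Proof.
move=> d_gt0; have [|q] := @rat_in_itvoo R (r - d) (r + d); first lra.
by rewrite in_itv /= => /andP[rq qr]; exists q; rewrite ltr_norml; apply/andP; split; lra.
Qed.

Lemma qseq_approx (y : nat -> R) N e : 0 < e ->
  exists2 s : seq rat, size s = N & \sum_(0 <= k < N) (y k - qseq s k) ^+ 2 < e.
Proof.
move=> e_gt0; pose d := Num.sqrt (e / N.+1%:R).
have d_gt0 : 0 < d by rewrite sqrtr_gt0 divr_gt0.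
have [q yq] := boolp.choice (fun i => rat_approx (y i) d_gt0).
exists [seq q i | i <- iota 0 N]; first by rewrite size_map size_iota.
apply: (@le_lt_trans _ _ (\sum_(0 <= k < N) d ^+ 2)).
  apply: ler_sum_nat => i /andP[_ iN].
  rewrite /qseq (nth_map 0%N) ?size_iota // nth_iota // add0n -real_normK ?num_real //.
  by rewrite ler_sqr ?nnegrE ?sqrtr_ge0 //; exact/ltW/yq.
rewrite sumr_const_nat subn0 /d sqr_sqrtr ?divr_ge0 ?ltW // -(mulr_natr (e / _)) mulrAC.
by rewrite ltr_pdivrMr // ltr_pM2l // ltr_nat.
Qed.

Lemma l2_tail_lt (y : l2 R) e : 0 < e ->
  exists N, (\sum_(N <= k <oo) ((val y k) ^+ 2)%:E < e%:E)%E.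
Proof.
move=> e_gt0.
have tail0 : (\sum_(N <= k <oo) ((val y k) ^+ 2)%:E @[N --> \oo] --> 0)%E.
  by apply: nneseries_tail_cvg (l2predE y) _ => k _; rewrite lee_fin sqr_ge0.
have e_gt0' : (0 < e%:E)%E by rewrite lte_fin.
have [N _ tailN] := tail0 _ (open_ereal_lt' e_gt0').
by exists N; exact: (tailN N (leqnn N)).
Qed.

Lemma l2_approx (y : l2 R) e : 0 < e ->
  exists s, (l2dist2 (val y) (qseq s) < e%:E)%E.
Proof.
move=> e_gt0; have e2_gt0 : 0 < e / 2 by rewrite divr_gt0.
have [N tailN] := l2_tail_lt y e2_gt0.
have [s sN ys] := qseq_approx (val y) N e2_gt0.
exists s; rewrite /l2dist2 (nneseries_split 0 N); last first.
  by move=> k _; rewrite lee_fin sqr_ge0.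
rewrite add0n sumEFin [e]splitr EFinD lteD //.
suff -> : (\sum_(N <= k <oo) ((val y k - qseq s k) ^+ 2)%:E =
           \sum_(N <= k <oo) ((val y k) ^+ 2)%:E)%E by [].
congr (limn _); apply/funext => n; apply: eq_big_nat => i /andP[Ni _].
by rewrite /qseq nth_default ?sN // rmorph0 subr0.
Qed.

Lemma separable_l2 : separable_space (l2 R).
Proof.
exists (range qel); split.
  exact: sub_countable (card_image_le qel setT) (countableP setT).
move=> O [y Oy] /l2_openE /(_ y Oy) [e e_gt0 yeO].
by have [s ys] := l2_approx y e_gt0; exists (qel s); split; [exact: yeO | exists s].
Qed.

Lemma polish_l2 : polish R (l2 R).
Proof.
apply/polishP; exists (@l2d R); split.
- exact: is_metric_l2d.
- exact: metrizes_l2d.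
- exact: l2_complete.
- exact: separable_l2.
Qed.

End l2_separable.

Section hypercyclic.
Variable R : realType.

Lemma coord_continuous i : continuous (fun x : l2 R => val x i).
Proof.
move=> x A /= /nbhs_ballP [e e_gt0 xeA].
apply/(metric_nbhsP (@is_metric_l2d R) (@metrizes_l2d R)); exists e => // y xy.
by apply: xeA; rewrite /ball /=; exact: le_lt_trans (coord_le_l2d _ _ _) xy.
Qed.

Lemma iter_Bw_continuous (S : topologicalType) (g : S -> nat -> R) k i :
  (forall j, continuous (fun p => g p j)) ->
  continuous (fun z : S * l2 R => iter k (Bw (g z.1)) (val z.2) i).
Proof.
move=> gc; elim: k i => [|k IHk] i z /=.
  apply: (@continuous_comp _ _ _ snd (fun x : l2 R => val x i)).
    exact: cvg_snd.
  exact: coord_continuous.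
apply: (@cvgM _ _ _ _ (fun z : S * l2 R => g z.1 i)
          (fun z => iter k (Bw (g z.1)) (val z.2) i.+1)); last exact: IHk.
by apply: (@continuous_comp _ _ _ fst (fun p => g p i)); [exact: cvg_fst | exact: gc].
Qed.

Lemma open_l2dist2_gt (S : topologicalType) (f : S -> nat -> R) (c : nat -> R) (r : R) :
  (forall k, continuous (fun z => f z k)) ->
  open [set z | (r%:E < l2dist2 c (f z))%E].
Proof.
move=> fc; have -> : [set z | (r%:E < l2dist2 c (f z))%E] =
    \bigcup_N [set z | r < \sum_(0 <= k < N) (c k - f z k) ^+ 2].
  apply/seteqP; split=> z; rewrite /= /l2dist2.
    by move=> /(nneseries_gtP _ (fun k => sqr_ge0 _)) [N cfN]; exists N.
  by move=> [N _ cfN]; apply/(nneseries_gtP _ (fun k => sqr_ge0 _)); exists N.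
apply: bigcup_open => N _.
have psum_cont : continuous (fun z => \sum_(0 <= k < N) (c k - f z k) ^+ 2).
  by move=> z; apply: cvg_psum_sqr_dist => k; exact: fc.
exact: (continuousP _).1 psum_cont _ (@open_gt _ r).
Qed.

(* [f k] need not lie in l2; [l2dist2 _ (f k)] is then [+oo], so the right-hand
   side ignores exactly the iterates that the left-hand side ignores. *)
Lemma dense_l2_seqP (f : nat -> nat -> R) :
  dense [set y : l2 R | exists k, val y = f k] <->
  forall (s : seq rat) (m : nat),
    exists k, (l2dist2 (qseq R s) (f k) <= (m.+1%:R^-1)%:E)%E.
Proof.
have [_ l2d_eq0 _ _] := @is_metric_l2d R.
split=> [f_dense s m|f_near O [y Oy] /metrizes_l2d /(_ y Oy) [e e_gt0 yeO]].
  set r : R := m.+1%:R^-1; have r_gt0 : 0 < r by rewrite invr_gt0.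
  have [|z [sz [k zk]]] := f_dense [set z | l2d (qel R s) z < Num.sqrt r] _
    (open_metric_ball (@is_metric_l2d R) (@metrizes_l2d R) _ _).
    by exists (qel R s); rewrite /= (l2d_eq0 _ _).2 // sqrtr_gt0.
  exists k; rewrite -zk -[r](sqr_sqrtr (ltW r_gt0)) -(l2d_leE (qel R s) z) ?sqrtr_ge0 //.
  exact: ltW.
have e2_gt0 : 0 < e / 2 by rewrite divr_gt0.
have [s ys] := l2_approx y (exprn_gt0 2 e2_gt0).
have [m _ /(_ m (leqnn m)) m_lt] := near_infty_natSinv_lt (PosNum (exprn_gt0 2 e2_gt0)).
have [k sk] := f_near s m.
have fk_l2 : l2pred (f k).
  by apply: (l2pred_l2dist2 (l2pred_qseq R s)); exact: le_lt_trans sk (ltry _).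
exists (exist _ (f k) fk_l2); split; last by exists k.
apply: yeO; rewrite /= [e]splitr; apply: le_lt_trans (l2d_triangle y (qel R s) _) _.
apply: ltrD; first by rewrite l2d_ltE ?ltW.
by rewrite l2d_ltE ?ltW //; apply: le_lt_trans sk _; rewrite lte_fin.
Qed.

Lemma borel_not_HC (P : topologicalType) (B : set P) (g : P -> nat -> R) :
  borel_set B -> (forall i, {within B, continuous (fun p => g p i)}) ->
  borel_set [set z : P * l2 R | B z.1 /\ ~ HC (g z.1) z.2].
Proof.
move=> bB gc.
pose U s m k := [set z : subspace B * l2 R |
  ((m.+1%:R^-1)%:E < l2dist2 (qseq R s) (iter k (Bw (g z.1)) (val z.2)))%E].
have -> : [set z : P * l2 R | B z.1 /\ ~ HC (g z.1) z.2] =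
    \bigcup_(s : seq rat) \bigcup_(m : nat) \bigcap_(k : nat) (fst @^-1` B `&` U s m k).
  apply/seteqP; split=> -[p x] /=.
    move=> [Bp /dense_l2_seqP /existsNP[s /existsNP[m /forallNP xsm]]].
    by exists s => //; exists m => // k _; split=> //; rewrite /U /= ltNge; exact/negP.
  move=> [s _ [m _ xsm]]; have [Bp _] := xsm 0%N I; split=> //.
  move=> /dense_l2_seqP /(_ s m) [k]; apply/negP; rewrite -ltNge.
  by case: (xsm k I).
apply: borel_bigcup => s; apply: borel_bigcup => m; apply: borel_bigcap => k.
apply: borel_subspaceX_open bB _; apply: open_l2dist2_gt => i.
exact: iter_Bw_continuous.
Qed.

Lemma setC_HCstar_image (P : Type) (B : set P) (g : P -> nat -> R) :
  ~` HCstar (g @` B) = snd @` [set z : P * l2 R | B z.1 /\ ~ HC (g z.1) z.2].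
Proof.
apply/seteqP; split=> [x /= xHC|_ [[p x] [Bp xHC] <-] /= xHCstar].
  have [_ [p Bp <-] gpx] : exists2 w, (g @` B) w & ~ HC w x.
    apply: contrapT => nw; apply: xHC => w gBw; apply: contrapT => wx.
    by apply: nw; exists w.
  by exists (p, x).
by apply: xHC; apply: xHCstar; exists p.
Qed.

End hypercyclic.

Theorem proposition1 (R : realType) (W : set {ptws nat -> R}) :
  W `<=` @linf R -> analytic R W -> coanalytic R (HCstar W).
Proof.
move=> _ [P [B [g [P_polish B_borel g_cont <-]]]].
exists (P * l2 R)%type, [set z | B z.1 /\ ~ HC (g z.1) z.2], snd; split.
- exact: polishX P_polish (polish_l2 R).
- apply: (@borel_not_HC R _ _ g B_borel) => i p.
  apply: (@continuous_comp _ _ _ (from_subspace B g) (fun f => f i)).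
    exact: g_cont.
  exact: (@proj_continuous nat (fun _ => R) i).
- by apply: continuous_subspaceT => z; exact: cvg_snd.
- by rewrite (setC_HCstar_image B g).
Qed.
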